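(* Let $a\in\mathbb F^*$, let $g,h\in\mathcal R$ satisfy $x^n-a=hg$, and let $f\in\mathcal R$. Then $$M^\theta_a(\overline{fg})=M^\theta_c(\overline f)\,M^\theta_a(\overline g),\qquad\text{where } c=\gamma(a,g).$$
   Context: $\mathbb F$ is a finite field, $\theta\in\mathrm{Aut}(\mathbb F)$, and $\mathcal R=\mathbb F[x;\theta]$ is the skew polynomial ring: elements $\sum_i f_ix^i$ with $f_i\in\mathbb F$ on the left, usual addition, multiplication determined by $xb=\theta(b)x$ for $b\in\mathbb F$. Fix $n\in\mathbb N$. For $b\in\mathbb F^*$, $\mathcal S_b=\mathcal R/\mathcal R(x^n-b)$ (a left $\mathcal R$-module); $\overline f$ denotes the coset of $f$, and in $M^\theta_b(\overline f)$ the coset is taken in $\mathcal S_b$. Let $\mathfrak v_b:\mathcal S_b\to\mathbb F^n$ be the inverse of the isomorphism $(c_0,\dots,c_{n-1})\mapsto\overline{\sum_{i=0}^{n-1}c_ix^i}$. The $(\theta,b)$-circulant $M^\theta_b(\overline f)$ is the $n\times n$ matrix whose row with index $i$ ($i=0,\dots,n-1$) is $\mathfrak v_b(\overline{x^if})$. For a right divisor $g=\sum g_ix^i$ of $x^n-a$ (so $g_0\ne0$), $\gamma(a,g)=a\,g_0^{-1}\theta^n(g_0)$. *)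

From HB Require Import structures.
From mathcomp Require Import all_boot all_order all_algebra all_field.
From Stdlib Require Import ClassicalEpsilon.
Set Implicit Arguments. Unset Strict Implicit. Unset Printing Implicit Defensive.
Import GRing.Theory.
Local Open Scope ring_scope.

(* Elements of R = F[x;theta] are stored as their coefficient lists
   sum_i f_i x^i (coefficients on the left), using the type {poly F} only
   as a container; the ring product of R is [skmul] below, NOT the
   commutative product of {poly F}. *)

(* (sum_i f_i x^i)(sum_j g_j x^j) = sum_k (sum_{i+j=k} f_i theta^i(g_j)) x^k,
   which is the product determined by x b = theta(b) x. *)
Definition skmul (F : finFieldType) (theta : {rmorphism F -> F})
  (f g : {poly F}) : {poly F} :=
  \poly_(k < (size f + size g).-1)
     \sum_(i < k.+1) f`_i * iter i theta (g`_(k - i)).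

Definition rowpoly (F : finFieldType) (n : nat) (c : 'rV[F]_n) : {poly F} :=
  \sum_(j < n) c 0 j *: 'X^j.

(* v_b : S_b -> F^n, the inverse of c |-> coset of sum c_i x^i, applied to
   the coset of f in S_b = R / R(x^n - b): the (unique) c such that
   f - sum c_j x^j lies in the left ideal R (x^n - b). *)
Definition vrep (F : finFieldType) (theta : {rmorphism F -> F}) (n : nat)
  (b : F) (f : {poly F}) : 'rV[F]_n :=
  ClassicalEpsilon.epsilon (inhabits 0)
    (fun c : 'rV[F]_n =>
       exists q : {poly F}, f = skmul theta q ('X^n - b%:P) + rowpoly c).

Definition circ (F : finFieldType) (theta : {rmorphism F -> F}) (n : nat)
  (b : F) (f : {poly F}) : 'M[F]_n :=
  \matrix_(i < n, j < n) vrep theta n b (skmul theta 'X^i f) 0 j.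

Definition gamma (F : finFieldType) (theta : {rmorphism F -> F}) (n : nat)
  (a : F) (g : {poly F}) : F :=
  a * (g`_0)^-1 * iter n theta (g`_0).

From HB Require Import structures.
From mathcomp Require Import all_boot all_order all_algebra all_field.
From Stdlib Require Import ClassicalEpsilon Lia.
From mathcomp Require Import zify.
Set Implicit Arguments. Unset Strict Implicit. Unset Printing Implicit Defensive.
Import GRing.Theory.
Local Open Scope ring_scope.

(* Let c = gamma(a, g) and let G be g with theta^n applied to its coefficients,
   so that x^n g = G x^n.  Then r := x^n - c - G h satisfies r g = G a - c g,
   a polynomial of degree at most deg g whose constant term vanishes by the
   choice of c; comparing degrees forces r = 0, i.e.
   (x^n - c) g = G (x^n - a).  So right multiplication by g maps R(x^n - c)
   into R(x^n - a): if d is row i of M_c(f), i.e. x^i f = sum_k d_k x^k modulo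
   R(x^n - c), then x^i f g = sum_k d_k x^k g modulo R(x^n - a), and since v_a
   is linear, row i of M_a(fg) is d M_a(g). *)

Section SkewArithmetic.
Variables (F : finFieldType) (theta : {rmorphism F -> F}).
Local Notation "f ** g" := (skmul theta f g) (at level 40, left associativity).

Lemma iter_rmorph0 i : iter i theta 0 = 0.
Proof. by elim: i => //= i ->; rewrite rmorph0. Qed.

Lemma iter_rmorph1 i : iter i theta 1 = 1.
Proof. by elim: i => //= i ->; rewrite rmorph1. Qed.

Lemma iter_rmorphD i x y : iter i theta (x + y) = iter i theta x + iter i theta y.
Proof. by elim: i => //= i ->; rewrite rmorphD. Qed.

Lemma iter_rmorphB i x y : iter i theta (x - y) = iter i theta x - iter i theta y.
Proof. by elim: i => //= i ->; rewrite rmorphB. Qed.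

Lemma iter_rmorphM i x y : iter i theta (x * y) = iter i theta x * iter i theta y.
Proof. by elim: i => //= i ->; rewrite rmorphM. Qed.

Lemma iter_rmorph_eq0 i x : (iter i theta x == 0) = (x == 0).
Proof. by elim: i => //= i <-; rewrite fmorph_eq0. Qed.

Lemma coef_skmul f g k :
  (f ** g)`_k = \sum_(i < k.+1) f`_i * iter i theta g`_(k - i).
Proof.
rewrite /skmul coef_poly; case: ltnP => // hk; rewrite big1 // => i _.
have [hi|hi] := ltnP i (size f); last by rewrite nth_default ?mul0r.
rewrite (@nth_default _ 0 g) ?iter_rmorph0 ?mulr0 //.
move: hk hi; rewrite -subn1; case: i => i /= _; lia.
Qed.

Lemma skmulDl f1 f2 g : (f1 + f2) ** g = f1 ** g + f2 ** g.
Proof.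
apply/polyP => k; rewrite coefD !coef_skmul -big_split.
by apply: eq_bigr => i _; rewrite coefD mulrDl.
Qed.

Lemma skmulBl f1 f2 g : (f1 - f2) ** g = f1 ** g - f2 ** g.
Proof.
apply/polyP => k; rewrite coefB !coef_skmul -sumrB.
by apply: eq_bigr => i _; rewrite coefB mulrBl.
Qed.

Lemma skmulZl c f g : (c *: f) ** g = c *: (f ** g).
Proof.
apply/polyP => k; rewrite coefZ !coef_skmul mulr_sumr.
by apply: eq_bigr => i _; rewrite coefZ mulrA.
Qed.

Lemma skmulDr f g1 g2 : f ** (g1 + g2) = f ** g1 + f ** g2.
Proof.
apply/polyP => k; rewrite coefD !coef_skmul -big_split.
by apply: eq_bigr => i _; rewrite coefD iter_rmorphD mulrDr.
Qed.

Lemma skmulBr f g1 g2 : f ** (g1 - g2) = f ** g1 - f ** g2.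
Proof.
apply/polyP => k; rewrite coefB !coef_skmul -sumrB.
by apply: eq_bigr => i _; rewrite coefB iter_rmorphB mulrBr.
Qed.

Lemma skmul0l g : 0 ** g = 0.
Proof. by rewrite -{1}(subrr (0 : {poly F})) skmulBl subrr. Qed.

Lemma skmul0r f : f ** 0 = 0.
Proof. by rewrite -{1}(subrr (0 : {poly F})) skmulBr subrr. Qed.

Lemma skmul_suml I (r : seq I) (P : pred I) (E : I -> {poly F}) g :
  (\sum_(i <- r | P i) E i) ** g = \sum_(i <- r | P i) E i ** g.
Proof. by apply: (big_morph (skmul theta ^~ g)) => [f1 f2|]; rewrite ?skmulDl ?skmul0l. Qed.

Lemma skmul_sumr I (r : seq I) (P : pred I) (E : I -> {poly F}) f :
  f ** (\sum_(i <- r | P i) E i) = \sum_(i <- r | P i) f ** E i.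
Proof. by apply: (big_morph (skmul theta f)) => [g1 g2|]; rewrite ?skmulDr ?skmul0r. Qed.

Lemma skmul_monomial a i b j :
  (a *: 'X^i) ** (b *: 'X^j) = (a * iter i theta b) *: 'X^(i + j).
Proof.
apply/polyP => k; rewrite coef_skmul coefZ coefXn.
have [->|hk] := eqVneq k (i + j)%N.
  have hi : (i < (i + j).+1)%N by lia.
  rewrite (bigD1 (Ordinal hi)) //= big1 => [|l hl].
    by rewrite !coefZ !coefXn eqxx addKn eqxx !mulr1 addr0.
  by move: hl; rewrite coefZ coefXn -val_eqE /= => /negbTE ->; rewrite mulr0 mul0r.
rewrite mulr0 big1 // => l _; rewrite !coefZ !coefXn.
have [hli|] := eqVneq (val l) i; last by rewrite mulr0 mul0r.
have [hj|] := eqVneq (k - l)%N j; last by rewrite mulr0 iter_rmorph0 mulr0.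
by move: hk (ltn_ord l); rewrite -hj -hli; case: l {hli hj} => l /= _; lia.
Qed.

Lemma poly_expand_le (f : {poly F}) N :
  (size f <= N)%N -> f = \sum_(i < N) f`_i *: 'X^i.
Proof.
move=> hN; rewrite -poly_def; apply/polyP => k; rewrite coef_poly.
by case: ltnP => // hk; rewrite nth_default //; apply: leq_trans hk.
Qed.

Lemma poly_expand (f : {poly F}) : f = \sum_(i < size f) f`_i *: 'X^i.
Proof. exact: poly_expand_le. Qed.

Lemma skmul_monomialA a i b j h :
  (a *: 'X^i) ** (b *: 'X^j) ** h = (a *: 'X^i) ** ((b *: 'X^j) ** h).
Proof.
rewrite [h]poly_expand skmul_monomial !skmul_sumr.
by apply: eq_bigr => l _; rewrite !skmul_monomial iter_rmorphM -iterD mulrA addnA.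
Qed.

Lemma skmulA f g h : f ** g ** h = f ** (g ** h).
Proof.
rewrite [f]poly_expand [g]poly_expand !(skmul_suml, skmul_sumr).
apply: eq_bigr => i _; rewrite !(skmul_suml, skmul_sumr).
by apply: eq_bigr => j _; rewrite skmul_monomialA.
Qed.

Lemma skmulCl c g : c%:P ** g = c *: g.
Proof.
apply/polyP => k; rewrite coef_skmul coefZ big_ord_recl coefC eqxx subn0.
by rewrite big1 ?addr0 // => i _; rewrite coefC mul0r.
Qed.

Lemma coef_skmulCr g c k : (g ** c%:P)`_k = g`_k * iter k theta c.
Proof.
rewrite coef_skmul big_ord_recr /= subnn coefC eqxx big1 ?add0r // => i _.
by rewrite coefC subn_eq0 leqNgt ltn_ord iter_rmorph0 mulr0.
Qed.

Lemma coef0_skmul f g : (f ** g)`_0 = f`_0 * g`_0.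
Proof. by rewrite coef_skmul big_ord1. Qed.

Lemma skmulXn_map n g : 'X^n ** g = map_poly (iter n theta) g ** 'X^n.
Proof.
rewrite /map_poly poly_def {1}[g]poly_expand skmul_sumr skmul_suml.
apply: eq_bigr => i _.
by rewrite -(scale1r 'X^n) !skmul_monomial iter_rmorph1 mulr1 mul1r addnC.
Qed.

Lemma coef_skmul_top f g :
  (f ** g)`_((size f).-1 + (size g).-1)
  = lead_coef f * iter (size f).-1 theta (lead_coef g).
Proof.
have hi : ((size f).-1 < ((size f).-1 + (size g).-1).+1)%N by lia.
rewrite coef_skmul (bigD1 (Ordinal hi)) //= addKn big1 ?addr0 // => -[l lt_l].
rewrite -val_eqE /= => hl.
have [hlf|hlf] := ltnP (size f).-1 l.
  by rewrite nth_default ?mul0r //; apply: leq_trans (leqSpred _) hlf.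
have {hl}hlf : (l < (size f).-1)%N by rewrite ltn_neqAle hl hlf.
have hg : (size g <= (size f).-1 + (size g).-1 - l)%N by lia.
by rewrite (nth_default 0 hg) iter_rmorph0 mulr0.
Qed.

Lemma size_skmul f g :
  f != 0 -> g != 0 -> size (f ** g) = (size f + size g).-1.
Proof.
move=> f0 g0; apply/eqP; rewrite eqn_leq size_poly /=.
have top : ((size f).-1 + (size g).-1 < size (f ** g))%N.
  rewrite ltnNge; apply/negP => /leq_sizeP/(_ _ (leqnn _)); apply/eqP.
  by rewrite coef_skmul_top mulf_neq0 ?iter_rmorph_eq0 ?lead_coef_eq0.
have sf : (0 < size f)%N by rewrite size_poly_gt0.
have sg : (0 < size g)%N by rewrite size_poly_gt0.
by rewrite -(prednK sf) -(prednK sg) addSn addnS.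
Qed.

End SkewArithmetic.

Lemma rowpoly_is_linear (F : finFieldType) n : linear (@rowpoly F n).
Proof.
move=> k c d; rewrite /rowpoly scaler_sumr -big_split; apply: eq_bigr => j _.
by rewrite !mxE scalerDl scalerA.
Qed.

HB.instance Definition _ (F : finFieldType) n :=
  GRing.isLinear.Build _ _ _ _ (@rowpoly F n) (@rowpoly_is_linear F n).

Lemma coef_rowpoly (F : finFieldType) n (c : 'rV[F]_n) (j : 'I_n) :
  (rowpoly c)`_j = c 0 j.
Proof.
rewrite /rowpoly coef_sum (bigD1 j) //= coefZ coefXn eqxx mulr1 big1 ?addr0 //.
by move=> k; rewrite coefZ coefXn eq_sym -val_eqE => /negbTE ->; rewrite mulr0.
Qed.

Lemma size_rowpoly (F : finFieldType) n (c : 'rV[F]_n) : (size (rowpoly c) <= n)%N.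
Proof.
apply/leq_sizeP => k hk; rewrite /rowpoly coef_sum big1 // => j _.
by rewrite coefZ coefXn gtn_eqF ?mulr0 // (leq_trans (ltn_ord j)).
Qed.

Section Remainders.
Variables (F : finFieldType) (theta : {rmorphism F -> F}) (n : nat).
Local Notation "f ** g" := (skmul theta f g) (at level 40, left associativity).

Lemma skmul_XnsubC_monomial b c i :
  (c *: 'X^i) ** ('X^n - b%:P)
  = c *: 'X^(i + n) - (c * iter i theta b) *: 'X^i.
Proof.
have -> : b%:P = b *: 'X^0 :> {poly F} by rewrite expr0 alg_polyC.
by rewrite skmulBr -{1}(scale1r 'X^n) !skmul_monomial iter_rmorph1 mulr1 addn0.
Qed.

Lemma skew_division_XnsubC b f : (0 < n)%N ->
  exists q (c : 'rV[F]_n), f = q ** ('X^n - b%:P) + rowpoly c.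
Proof.
move=> n_gt0; elim: (size f).+1 {-2}f (ltnSn (size f)) => // N IH {}f sfN.
have [fn|nf] := leqP (size f) n.
  exists 0, (\row_j f`_j); rewrite skmul0l add0r {1}(poly_expand_le fn).
  by apply: eq_bigr => j _; rewrite mxE.
move sf: (size f).-1 => s; have {}sf : size f = s.+1 by rewrite -sf prednK //; lia.
set t := lead_coef f *: 'X^(s - n).
have sfB : (size (f - t ** ('X^n - b%:P))%R < N)%N.
  apply: (@leq_trans s.+1); last by rewrite -sf.
  apply/leq_sizeP => j hj; rewrite skmul_XnsubC_monomial subnK; last by lia.
  rewrite !coefB !coefZ !coefXn (gtn_eqF (_ : s - n < j)%N); last by lia.
  rewrite mulr0 subr0; have [->|hjs] := eqVneq j s.
    by rewrite mulr1 lead_coefE sf subrr.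
  by rewrite mulr0 subr0 nth_default // sf; lia.
have [q [c ec]] := IH _ sfB.
by exists (q + t), c; rewrite skmulDl -addrAC -ec subrK.
Qed.

Lemma skmul_XnsubC_eq_rowpoly b q (c : 'rV[F]_n) : (0 < n)%N ->
  q ** ('X^n - b%:P) = rowpoly c -> c = 0.
Proof.
move=> n_gt0 eqc; have q0 : q = 0.
  apply: contraTeq (size_rowpoly c) => q0; rewrite -eqc -ltnNge.
  have m0 : 'X^n - b%:P != 0 by rewrite -size_poly_gt0 size_XnsubC.
  rewrite size_skmul // size_XnsubC // addnS /= -{1}(add0n n) ltn_add2r.
  by rewrite size_poly_gt0.
by apply/rowP => j; rewrite mxE -coef_rowpoly -eqc q0 skmul0l coef0.
Qed.

Lemma vrepP b f : (0 < n)%N ->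
  exists q, f = q ** ('X^n - b%:P) + rowpoly (vrep theta n b f).
Proof.
move=> n_gt0; have [q [c ec]] := skew_division_XnsubC b f n_gt0.
by apply: (epsilon_spec (inhabits 0) (fun c => exists q, f = _ + rowpoly c)); exists c, q.
Qed.

Lemma vrep_unique b f q c : (0 < n)%N ->
  f = q ** ('X^n - b%:P) + rowpoly c -> vrep theta n b f = c.
Proof.
move=> n_gt0 ef; have [q' ef'] := vrepP b f n_gt0.
apply/eqP; rewrite eq_sym -subr_eq0; apply/eqP.
apply: (@skmul_XnsubC_eq_rowpoly b (q' - q)) => //; rewrite linearB skmulBl.
have -> : q' ** ('X^n - b%:P) = f - rowpoly (vrep theta n b f) by rewrite {1}ef' addrK.
have -> : q ** ('X^n - b%:P) = f - rowpoly c by rewrite ef addrK.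
by rewrite opprB addrC addrA subrK.
Qed.

End Remainders.

Lemma vrep_is_linear (F : finFieldType) (theta : {rmorphism F -> F}) n b :
  linear (vrep theta n b).
Proof.
move=> k f g; have [->|n_gt0] := posnP n; first by apply/rowP => -[].
have [qf ef] := vrepP theta b f n_gt0; have [qg eg] := vrepP theta b g n_gt0.
apply: (@vrep_unique _ _ _ _ _ (k *: qf + qg)) => //.
by rewrite {1}ef {1}eg linearP skmulDl skmulZl scalerDr addrACA.
Qed.

HB.instance Definition _ (F : finFieldType) (theta : {rmorphism F -> F}) n b :=
  GRing.isLinear.Build _ _ _ _ (vrep theta n b) (@vrep_is_linear F theta n b).

Section Circulants.
Variables (F : finFieldType) (theta : {rmorphism F -> F}) (n : nat).
Local Notation "f ** g" := (skmul theta f g) (at level 40, left associativity).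

Lemma row_circ b f (i : 'I_n) :
  row i (circ theta n b f) = vrep theta n b ('X^i ** f).
Proof. by apply/rowP => j; rewrite !mxE. Qed.

Lemma vrep_skmul_XnsubC b q :
  (0 < n)%N -> vrep theta n b (q ** ('X^n - b%:P)) = 0.
Proof. by move=> n_gt0; apply: (@vrep_unique _ _ _ _ _ q); rewrite ?linear0 ?addr0. Qed.

Lemma vrep_rowpoly_skmul b (d : 'rV[F]_n) g :
  vrep theta n b (rowpoly d ** g) = d *m circ theta n b g.
Proof.
rewrite mulmx_sum_row /rowpoly skmul_suml linear_sum; apply: eq_bigr => j _.
by rewrite skmulZl linearZ row_circ.
Qed.

Lemma vrep_skmul_circ a c g u p : (0 < n)%N ->
  ('X^n - c%:P) ** g = u ** ('X^n - a%:P) ->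
  vrep theta n a (p ** g) = vrep theta n c p *m circ theta n a g.
Proof.
move=> n_gt0 hg; have [q ep] := vrepP theta c p n_gt0.
rewrite {1}ep skmulDl skmulA hg -skmulA linearD /= vrep_skmul_XnsubC // add0r.
exact: vrep_rowpoly_skmul.
Qed.

Lemma coef0_neq0_XnsubC_factor a g h : (0 < n)%N -> a != 0 ->
  'X^n - a%:P = h ** g -> g`_0 != 0.
Proof.
move=> n_gt0 a0 hg; have := congr1 (fun p : {poly F} => p`_0) hg.
rewrite /= coef0_skmul coefB coefXn coefC (ltn_eqF n_gt0) sub0r => ea.
by apply: contra_neq a0 => g00; apply/eqP; rewrite -oppr_eq0 ea g00 mulr0.
Qed.

Lemma skmul_eq0_of_size_le (r g : {poly F}) : g`_0 != 0 ->
  (size (r ** g) <= size g)%N -> (r ** g)`_0 = 0 -> r ** g = 0.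
Proof.
move=> g00 srg rg0; have [->|r0] := eqVneq r 0; first exact: skmul0l.
have g0 : g != 0 by apply: contraNneq g00 => ->; rewrite coef0.
have /size1_polyC er : (size r <= 1)%N.
  have sg : (0 < size g)%N by rewrite size_poly_gt0.
  move: srg; rewrite size_skmul //; lia.
move: rg0; rewrite er skmulCl coefZ => /eqP.
by rewrite mulf_eq0 (negbTE g00) orbF => /eqP ->; rewrite scale0r.
Qed.

Lemma XnsubC_gamma_skmul a g h : (0 < n)%N -> a != 0 ->
  'X^n - a%:P = h ** g ->
  ('X^n - (gamma theta n a g)%:P) ** g
  = map_poly (iter n theta) g ** ('X^n - a%:P).
Proof.
move=> n_gt0 a0 hg; have g00 := coef0_neq0_XnsubC_factor n_gt0 a0 hg.
set c := gamma theta n a g; set G := map_poly (iter n theta) g.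
have rg : ('X^n - c%:P) ** g - G ** ('X^n - a%:P) = ('X^n - c%:P - G ** h) ** g.
  by rewrite [RHS]skmulBl skmulA -hg.
have defD : ('X^n - c%:P) ** g - G ** ('X^n - a%:P) = G ** a%:P - c *: g.
  by rewrite skmulBl skmulBr skmulCl skmulXn_map -/G opprB addrC addrA subrK.
have coefD k : (G ** a%:P - c *: g)`_k = iter n theta g`_k * iter k theta a - c * g`_k.
  by rewrite coefB coefZ coef_skmulCr coef_map_id0 ?iter_rmorph0.
apply/eqP; rewrite -subr_eq0 rg; apply/eqP/skmul_eq0_of_size_le; rewrite // -rg defD.
  by apply/leq_sizeP => k hk; rewrite coefD nth_default // iter_rmorph0 !mul0r mulr0 subrr.
by rewrite coefD /c /gamma /= [a * _ * _]mulrAC divfK // mulrC subrr.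
Qed.

End Circulants.

Theorem theorem5p3 (F : finFieldType) (theta : {rmorphism F -> F})
  (theta_aut : bijective theta) (n : nat) (a : F) (g h f : {poly F}) :
  a != 0 ->
  'X^n - a%:P = skmul theta h g ->
  circ theta n a (skmul theta f g)
  = circ theta n (gamma theta n a g) f *m circ theta n a g.
Proof.
move=> a0 hg; have [->|n_gt0] := posnP n; first by apply/matrixP => -[].
apply/row_matrixP => i; rewrite row_mul !row_circ -skmulA.
exact: vrep_skmul_circ n_gt0 (XnsubC_gamma_skmul n_gt0 a0 hg).
Qed.
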